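(* Let $\sigma$ be a signature and $\mathcal K$ a nonempty class of causal teams over $\sigma$ (respectively, of generalized causal teams over $\sigma$). The following are equivalent: (i) $\mathcal K$ is causally downward closed and closed under equivalence; (ii) $\mathcal K=\{T:T\models\varphi\}$ for some $\mathcal{CO}_{\sqcup}[\sigma]$-formula $\varphi$; (iii) $\mathcal K=\{T:T\models\varphi\}$ for some $\mathcal{COD}[\sigma]$-formula $\varphi$ (satisfaction being $\models^c$, respectively $\models^g$).
   Context: A signature $\sigma=(\mathrm{Dom},\mathrm{Ran})$: $\mathrm{Dom}$ is a nonempty finite set of variables and each $X\in\mathrm{Dom}$ has a nonempty finite range $\mathrm{Ran}(X)$. For a sequence $\mathbf X=\langle X_1,\dots,X_n\rangle$, $\mathrm{Ran}(\mathbf X)=\prod_i\mathrm{Ran}(X_i)$; $\mathbf X=\mathbf x$ abbreviates $X_1=x_1\wedge\dots\wedge X_n=x_n$; it is inconsistent if it contains $X=x$ and $X=x'$ with $x\ne x'$. Languages: $\mathcal{CO}[\sigma]$: $\alpha::=X=x\mid\neg\alpha\mid\alpha\wedge\alpha\mid\alpha\vee\alpha\mid\mathbf X=\mathbf x\;\Box\!\!\rightarrow\alpha$. $\mathcal{CO}_{\sqcup}[\sigma]$: $\varphi::=X=x\mid\neg\alpha\mid\varphi\wedge\varphi\mid\varphi\vee\varphi\mid\varphi\sqcup\varphi\mid\mathbf X=\mathbf x\;\Box\!\!\rightarrow\varphi$ ($\alpha\in\mathcal{CO}[\sigma]$, $\sqcup$ the global disjunction). $\mathcal{COD}[\sigma]$: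 $\varphi::=X=x\mid{=}(\mathbf X;Y)\mid\neg\alpha\mid\varphi\wedge\varphi\mid\varphi\vee\varphi\mid\mathbf X=\mathbf x\;\Box\!\!\rightarrow\varphi$ ($\alpha\in\mathcal{CO}[\sigma]$). Assignments $s$ on $\mathrm{Dom}$ with $s(X)\in\mathrm{Ran}(X)$ form $\mathbb A_\sigma$. A system of functions $\mathcal F$ assigns to each $V$ in $\mathrm{En}(\mathcal F)\subseteq\mathrm{Dom}$ a parent set $PA^{\mathcal F}_V\subseteq\mathrm{Dom}\setminus\{V\}$ and $\mathcal F_V:\mathrm{Ran}(PA^{\mathcal F}_V)\to\mathrm{Ran}(V)$; $\mathrm{Ex}(\mathcal F)=\mathrm{Dom}\setminus\mathrm{En}(\mathcal F)$; only recursive systems (acyclic parent graph) are considered, forming the finite set $\mathbb F_\sigma$. $s$ is compatible with $\mathcal F$ if $s(V)=\mathcal F_V(s(PA^{\mathcal F}_V))$ for $V\in\mathrm{En}(\mathcal F)$; $\mathbb S_\sigma$ is the set of compatible pairs $(s,\mathcal F)$. For consistent $\mathbf X=\mathbf x$, $\mathcal F_{\mathbf X=\mathbf x}$ restricts $\mathcal F$ to $\mathrm{En}(\mathcal F)\setminus\mathbf X$, and $s^{\mathcal F}_{\mathbf X=\mathbf x}$ is defined recursively: $X_i\mapsto x_i$; $V\mapsto s(V)$ for $V\in\mathrm{Ex}(\mathcal F)\setminus\mathbf X$; $V\mapsto\mathcal F_V(s^{\mathcal F}_{\mathbf X=\mathbf x}(PA^{\mathcal F}_V))$ otherwise. Causal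 team: $T=(T^-,\mathcal F)$, $\mathcal F\in\mathbb F_\sigma$, $T^-$ a set of assignments compatible with $\mathcal F$; all teams with empty team component are identified as $\emptyset$. Causal subteam: $(S^-,\mathcal F)$ with $S^-\subseteq T^-$ (and $\emptyset$). $T_{\mathbf X=\mathbf x}=(\{s^{\mathcal F}_{\mathbf X=\mathbf x}:s\in T^-\},\mathcal F_{\mathbf X=\mathbf x})$. $\models^c$: $T\models X=x$ iff $s(X)=x$ for all $s\in T^-$; $T\models{=}(\mathbf X;Y)$ iff for all $s,s'\in T^-$, $s(\mathbf X)=s'(\mathbf X)$ implies $s(Y)=s'(Y)$; $T\models\neg\alpha$ iff $(\{s\},\mathcal F)\not\models\alpha$ for all $s\in T^-$; $\wedge$ classical; $T\models\varphi\vee\psi$ iff there are causal subteams $T_1,T_2$ with $T_1^-\cup T_2^-=T^-$, $T_1\models\varphi$, $T_2\models\psi$; $T\models\varphi\sqcup\psi$ iff $T\models\varphi$ or $T\models\psi$; $T\models\mathbf X=\mathbf x\;\Box\!\!\rightarrow\varphi$ iff $\mathbf X=\mathbf x$ is inconsistent or $T_{\mathbf X=\mathbf x}\models\varphi$. Generalized causal team: a set $T\subseteq\mathbb S_\sigma$, $T^-=\{s:(s,\mathcal F)\in T\}$, causal subteams are subsets, $T_{\mathbf X=\mathbf x}=\{(s^{\mathcal F}_{\mathbf X=\mathbf x},\mathcal F_{\mathbf X=\mathbf x}):(s,\mathcal F)\in T\}$; $\models^g$ has the same clauses except $T\models\neg\alpha$ iff $\{(s,\mathcal F)\}\not\models\alpha$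 for all $(s,\mathcal F)\in T$, and $T\models\varphi\vee\psi$ iff $T=T_1\cup T_2$ with $T_1\models\varphi$, $T_2\models\psi$. Equivalence: $\mathrm{Cn}(\mathcal F)$ is the set of $V\in\mathrm{En}(\mathcal F)$ with $\mathcal F_V$ constant; $\mathcal F_V\sim\mathcal G_V$ iff $\mathcal F_V(\mathbf x\mathbf y)=\mathcal G_V(\mathbf x\mathbf z)$ for all $\mathbf x\in\mathrm{Ran}(PA^{\mathcal F}_V\cap PA^{\mathcal G}_V)$, $\mathbf y\in\mathrm{Ran}(PA^{\mathcal F}_V\setminus PA^{\mathcal G}_V)$, $\mathbf z\in\mathrm{Ran}(PA^{\mathcal G}_V\setminus PA^{\mathcal F}_V)$; $\mathcal F\sim\mathcal G$ iff $\mathrm{En}(\mathcal F)\setminus\mathrm{Cn}(\mathcal F)=\mathrm{En}(\mathcal G)\setminus\mathrm{Cn}(\mathcal G)$ and $\mathcal F_V\sim\mathcal G_V$ for all $V$ in that set. Nonempty causal teams $(T^-,\mathcal F)\approx(S^-,\mathcal G)$ iff $T^-=S^-$ and $\mathcal F\sim\mathcal G$. For generalized causal teams, $T^{\mathcal F}=\{(s,\mathcal G)\in T:\mathcal G\sim\mathcal F\}$ and $S\approx T$ iff $(S^{\mathcal F})^-=(T^{\mathcal F})^-$ for all $\mathcal F\in\mathbb F_\sigma$. $\mathcal K$ is causally downward closed if $T\in\mathcal K$ and $S$ a causal subteam of $T$ imply $S\in\mathcal K$; closed under equivalence if $T\in\mathcal K$ and $T\approx S$ imply $S\in\mathcal K$.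 *)

From mathcomp Require Import all_boot.
Set Implicit Arguments. Unset Strict Implicit. Unset Printing Implicit Defensive.

(* Signature sigma = (Dom, Ran): Dom is the finite type V of variables, and  *)
(* every range Ran X is a (nonempty, stated in the theorem) finite subset of *)
(* a common finite carrier Val of values.                                    *)
Section Causal.
Context {V Val : finType}.
Variable Ran : V -> {set Val}.

(* all total maps V -> Val; the assignments of A_sigma are those in range *)
Definition assign := {ffun V -> Val}.
Definition inr_on (A : {set V}) (t : assign) := [forall v in A, t v \in Ran v].
Definition inr (t : assign) := inr_on setT t.
Definition agree_on (A : {set V}) (t t' : assign) := [forall v in A, t v == t' v].

(* Raw representation of a system of functions:
   (En, PA, F) where PA v is the parent set of v, and F v t is
   Some (F_v (t restricted to PA v)) when v is endogenous and t is in range on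
   PA v, and None otherwise.  The well-formedness predicate [wf_sys] below
   makes this representation canonical, so that the systems [F] with
   [wf_sys F] are in bijection with the set F_sigma of recursive systems. *)
Definition sys := ({set V} * {ffun V -> {set V}} * {ffun V -> {ffun assign -> option Val}})%type.
Definition en (F : sys) : {set V} := F.1.1.
Definition pa (F : sys) (v : V) : {set V} := F.1.2 v.
Definition fn (F : sys) (v : V) (t : assign) : option Val := F.2 v t.

Definition parent_rel (F : sys) : rel V := fun u w => u \in pa F w.
Definition acyclic (F : sys) :=
  [forall v, forall u, (u \in pa F v) ==> ~~ connect (parent_rel F) v u].

Definition wf_sys (F : sys) : bool :=
  [&& [forall v, v \notin pa F v],
      [forall v, (v \notin en F) ==>
                 ((pa F v == set0) && [forall t, fn F v t == None])],
      [forall v, (v \in en F) ==> [forall t,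
          if fn F v t is Some y then inr_on (pa F v) t && (y \in Ran v)
          else ~~ inr_on (pa F v) t]],
      [forall v, forall t, forall t',
          agree_on (pa F v) t t' ==> (fn F v t == fn F v t')]
    & acyclic F].

Definition compat (F : sys) (s : assign) :=
  [forall v in en F, fn F v s == Some (s v)].

Definition state (s : assign) (F : sys) := [&& inr s, wf_sys F & compat F s].

Definition interv := seq (V * Val).
Definition consistent (xs : interv) :=
  all (fun p => all (fun q => (p.1 == q.1) ==> (p.2 == q.2)) xs) xs.
Definition look (xs : interv) (v : V) : option Val :=
  ohead [seq p.2 | p <- xs & p.1 == v].
Definition ivars (xs : interv) : {set V} := [set v | v \in map fst xs].

Definition restr (F : sys) (xs : interv) : sys :=
  (en F :\: ivars xs,
   [ffun v => if v \in ivars xs then set0 else pa F v],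
   [ffun v => if v \in ivars xs then [ffun _ => None] else F.2 v]).

(* s^F_{X=x}: the recursive definition is computed by iterating the defining
   equations #|V| times (which suffices since the parent graph is acyclic). *)
Definition step (F : sys) (xs : interv) (s t : assign) : assign :=
  [ffun v => if look xs v is Some x then x
             else if v \in en F then odflt (t v) (fn F v t) else s v].
Definition doint (F : sys) (xs : interv) (s : assign) : assign :=
  iter #|V| (step F xs s) s.

Inductive fml : Type :=
  | FEq  of V & Val
  | FDep of seq V & V
  | FNeg of fml
  | FAnd of fml & fml
  | FOr  of fml & fml
  | FGOr of fml & fml
  | FCf  of interv & fml.

Fixpoint isCO (f : fml) : bool :=
  match f with
  | FEq _ _ => true
  | FNeg a => isCO a
  | FAnd a b | FOr a b => isCO a && isCO b
  | FCf _ a => isCO a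
  | _ => false
  end.

Fixpoint isCOsq (f : fml) : bool :=
  match f with
  | FEq _ _ => true
  | FNeg a => isCO a
  | FAnd a b | FOr a b | FGOr a b => isCOsq a && isCOsq b
  | FCf _ a => isCOsq a
  | FDep _ _ => false
  end.

Fixpoint isCOD (f : fml) : bool :=
  match f with
  | FEq _ _ | FDep _ _ => true
  | FNeg a => isCO a
  | FAnd a b | FOr a b => isCOD a && isCOD b
  | FCf _ a => isCOD a
  | FGOr _ _ => false
  end.

Fixpoint wff (f : fml) : bool :=
  match f with
  | FEq X x => x \in Ran X
  | FDep _ _ => true
  | FNeg a => wff a
  | FAnd a b | FOr a b | FGOr a b => wff a && wff b
  | FCf xs a => all (fun p => p.2 \in Ran p.1) xs && wff a
  end.

(* A causal team is represented by a pair (T^-, F); all pairs with empty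
   team component are identified (see [ct_class]). *)
Definition cteam (T : {set assign} * sys) :=
  wf_sys T.2 && [forall s in T.1, inr s && compat T.2 s].

Fixpoint sat_c (f : fml) (T : {set assign}) (F : sys) : Prop :=
  match f with
  | FEq X x => forall s, s \in T -> s X = x
  | FDep Xs Y => forall s s', s \in T -> s' \in T ->
                 (forall X, X \in Xs -> s X = s' X) -> s Y = s' Y
  | FNeg a => forall s, s \in T -> ~ sat_c a [set s] F
  | FAnd a b => sat_c a T F /\ sat_c b T F
  | FOr a b => exists T1 T2 : {set assign},
                 T1 :|: T2 = T /\ sat_c a T1 F /\ sat_c b T2 F
  | FGOr a b => sat_c a T F \/ sat_c b T F
  | FCf xs a => consistent xs ->
                 sat_c a [set doint F xs s | s in T] (restr F xs)
  end.

Definition gteam (T : {set (assign * sys)}) := [forall p in T, state p.1 p.2].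

Fixpoint sat_g (f : fml) (T : {set (assign * sys)}) : Prop :=
  match f with
  | FEq X x => forall p, p \in T -> p.1 X = x
  | FDep Xs Y => forall p p', p \in T -> p' \in T ->
                 (forall X, X \in Xs -> p.1 X = p'.1 X) -> p.1 Y = p'.1 Y
  | FNeg a => forall p, p \in T -> ~ sat_g a [set p]
  | FAnd a b => sat_g a T /\ sat_g b T
  | FOr a b => exists T1 T2 : {set (assign * sys)},
                 T1 :|: T2 = T /\ sat_g a T1 /\ sat_g b T2
  | FGOr a b => sat_g a T \/ sat_g b T
  | FCf xs a => consistent xs ->
                 sat_g a [set (doint p.2 xs p.1, restr p.2 xs) | p in T]
  end.

Definition cnst (F : sys) (v : V) :=
  (v \in en F) && [forall t, forall t', inr t ==> inr t' ==> (fn F v t == fn F v t')].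
Definition encn (F : sys) : {set V} := [set v in en F | ~~ cnst F v].
(* F_v ~ G_v: F_v(x y) = G_v(x z) for all x on the common parents, y, z on the
   remaining ones; written with full in-range assignments t, t' that agree on
   the common parents (t gives x y, t' gives x z). *)
Definition simfn (F G : sys) (v : V) :=
  [forall t, forall t', inr t ==> inr t' ==> agree_on (pa F v :&: pa G v) t t' ==>
    (fn F v t == fn G v t')].
Definition simsys (F G : sys) :=
  (encn F == encn G) && [forall v in encn F, simfn F G v].

Definition gproj (T : {set (assign * sys)}) (F : sys) : {set assign} :=
  [set p.1 | p in [set p in T | simsys p.2 F]].
Definition geqv (S T : {set (assign * sys)}) :=
  forall F, wf_sys F -> gproj S F = gproj T F.

(* a class of causal teams: a predicate on pairs which holds only of causal
   teams and respects the identification of all empty teams *)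
Definition ct_class (K : {set assign} * sys -> Prop) :=
  (forall T, K T -> cteam T) /\
  (forall F G, K (set0, F) -> wf_sys G -> K (set0, G)).
Definition gt_class (K : {set (assign * sys)} -> Prop) :=
  forall T, K T -> gteam T.

Definition c_downward (K : {set assign} * sys -> Prop) :=
  forall T S : {set assign} * sys, K T -> S.2 = T.2 -> S.1 \subset T.1 -> K S.
Definition c_eqclosed (K : {set assign} * sys -> Prop) :=
  forall T S : {set assign} * sys, K T -> cteam S -> T.1 != set0 -> T.1 = S.1 -> simsys T.2 S.2 -> K S.
Definition g_downward (K : {set (assign * sys)} -> Prop) :=
  forall T S : {set (assign * sys)}, K T -> S \subset T -> K S.
Definition g_eqclosed (K : {set (assign * sys)} -> Prop) :=
  forall T S, K T -> gteam S -> geqv T S -> K S.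

Definition c_defines (K : {set assign} * sys -> Prop) (f : fml) :=
  forall T, cteam T -> (K T <-> sat_c f T.1 T.2).
Definition g_defines (K : {set (assign * sys)} -> Prop) (f : fml) :=
  forall T, gteam T -> (K T <-> sat_g f T).

End Causal.

From mathcomp Require Import all_boot boolp.
Set Implicit Arguments. Unset Strict Implicit. Unset Printing Implicit Defensive.

(* Satisfaction of every formula is preserved under subteams and under
   equivalence, the latter because the outcome of an intervention depends only
   on the equivalence class of the system ([doint_simsys]).  For the converse,
   a causal team (T^-, F) is read as the generalized team T^- x {F}.  Over a
   finite signature each state (s, F) is characterized up to equivalence, on
   singleton teams, by a CO formula: it fixes s and, for every variable v and
   every setting t of the other variables, the value v takes once they are set
   to t.  A class K closed downwards and under equivalence is then defined in
   CO_sqcup by the global disjunction, over T in K, of "every member is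
   equivalent to a member of T".  For COD, the atoms =(;v) under these
   interventions say that a team lies in one equivalence class, so tensor
   disjunctions of them bound the number of classes met by a team; K is the
   conjunction, over the irredundant teams X outside K, of "some class of X is
   missing". *)

Section Causal.
Variables (V Val : finType) (Ran : V -> {set Val}).
Local Notation assign := (@assign V Val).
Local Notation sys := (@sys V Val).
Local Notation interv := (@interv V Val).
Local Notation fml := (@fml V Val).

Lemma inrP (t : assign) : reflect (forall v, t v \in Ran v) (inr Ran t).
Proof.
apply: (iffP forallP) => H v; first by move: (H v); rewrite in_setT.
by rewrite in_setT H.
Qed.

Lemma agree_onP (A : {set V}) (t t' : assign) :
  reflect {in A, t =1 t'} (agree_on A t t').
Proof.
apply: (iffP forallP) => H v; first by move=> vA; move: (H v); rewrite vA => /eqP.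
by apply/implyP => /H ->.
Qed.

Lemma compatP (F : sys) (s : assign) :
  reflect {in en F, forall v, fn F v s = Some (s v)} (compat F s).
Proof.
apply: (iffP forallP) => H v; first by move=> ev; move: (H v); rewrite ev => /eqP.
by apply/implyP => /H ->.
Qed.

Lemma stateP (s : assign) (F : sys) :
  reflect [/\ inr Ran s, wf_sys Ran F & compat F s] (state Ran s F).
Proof. exact: and3P. Qed.

Lemma encnE (F : sys) v : (v \in encn Ran F) = (v \in en F) && ~~ cnst Ran F v.
Proof. by rewrite inE. Qed.

Lemma cnstP (F : sys) v : v \in en F ->
  reflect (forall t t', inr Ran t -> inr Ran t' -> fn F v t = fn F v t')
          (cnst Ran F v).
Proof.
move=> ev; rewrite /cnst ev; apply: (iffP forallP) => H.
  by move=> t t' it it'; apply/eqP; move: (H t) => /forallP/(_ t'); rewrite it it'.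
by move=> t; apply/forallP => t'; do 2!apply/implyP => ?; rewrite (H t t').
Qed.

Lemma simfnP (F G : sys) v : reflect (forall t t', inr Ran t -> inr Ran t' ->
    agree_on (pa F v :&: pa G v) t t' -> fn F v t = fn G v t') (simfn Ran F G v).
Proof.
apply: (iffP forallP) => H.
  move=> t t' it it' ag; apply/eqP.
  by move: (H t) => /forallP/(_ t'); rewrite it it' ag.
by move=> t; apply/forallP => t'; do 3!apply/implyP => ?; rewrite (H t t').
Qed.

Lemma simsysP (F G : sys) : reflect
  (encn Ran F = encn Ran G /\ {in encn Ran F, forall v, simfn Ran F G v})
  (simsys Ran F G).
Proof.
apply: (iffP andP) => [[/eqP E /forallP H]|[/eqP E H]]; split => //.
  by move=> v vF; move: (H v); rewrite vF.
by apply/forallP => v; apply/implyP/H.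
Qed.

Section WellFormed.
Variable F : sys.
Hypothesis wfF : wf_sys Ran F.

Lemma wf_notin_pa v : v \notin pa F v.
Proof. by case/and5P: wfF => /forallP. Qed.

Lemma wf_endogenous v t : v \in en F -> inr Ran t ->
  exists2 y, fn F v t = Some y & y \in Ran v.
Proof.
case/and5P: wfF => _ _ /forallP /(_ v) + _ _ ev it.
rewrite ev => /forallP /(_ t); case: (fn F v t) => [y /andP[_ yR]|]; first by exists y.
by move/inrP: it => it /forallP; case=> u; rewrite it implybT.
Qed.

Lemma wf_fn_agree v t t' : agree_on (pa F v) t t' -> fn F v t = fn F v t'.
Proof.
case/and5P: wfF => _ _ _ /forallP /(_ v) H _ ag.
by move: H => /forallP /(_ t) /forallP /(_ t') /implyP /(_ ag) /eqP.
Qed.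

Lemma wf_acyclic u v : u \in pa F v -> ~~ connect (parent_rel F) v u.
Proof.
case/and5P: wfF => _ _ _ _ /forallP /(_ v) /forallP /(_ u) H uv.
by move/implyP: H; apply.
Qed.

Definition ancestors v : {set V} := [set u | connect (parent_rel F) u v].

Lemma card_ancestors_pa u v : u \in pa F v -> #|ancestors u| < #|ancestors v|.
Proof.
move=> uv; apply/proper_card/properP; split.
  apply/subsetP => w; rewrite !inE => /connect_trans; apply.
  exact: connect1.
by exists v; rewrite inE ?connect0 // wf_acyclic.
Qed.

Lemma card_ancestors_gt0 v : 0 < #|ancestors v|.
Proof. by apply/card_gt0P; exists v; rewrite inE connect0. Qed.

Lemma ancestors_ind (P : V -> Prop) :
  (forall v, (forall u, u \in pa F v -> P u) -> P v) -> forall v, P v.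
Proof.
move=> IH v; move: {2}#|ancestors v| (leqnn #|ancestors v|) => n.
elim: n v => [|n IHn] v hv; first by move: (card_ancestors_gt0 v); rewrite leqNgt ltnS hv.
apply: IH => u /card_ancestors_pa uv; apply: IHn.
by rewrite -ltnS (leq_trans uv).
Qed.

End WellFormed.

(** * Interventions *)

Definition interv_inr (xs : interv) : bool :=
  all (fun p : V * Val => p.2 \in Ran p.1) xs.

Lemma look_inr (xs : interv) v x : interv_inr xs -> look xs v = Some x -> x \in Ran v.
Proof.
elim: xs => [|p xs IH] //= /andP[p2 ok].
rewrite /look /=; case: eqP => [<- [<-] //|_]; exact: IH.
Qed.

Lemma look_None (xs : interv) v : (look xs v == None) = (v \notin ivars xs).
Proof.
rewrite /ivars inE; elim: xs => [|p xs IH] //=.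
rewrite /look /= in_cons; case: (p.1 =P v) => [->|ne] /=; first by rewrite eqxx.
by rewrite IH; case: eqP => // E; case: ne.
Qed.

Lemma stepE (F : sys) (xs : interv) (s t : assign) v : step F xs s t v =
  if look xs v is Some x then x
  else if v \in en F then odflt (t v) (fn F v t) else s v.
Proof. by rewrite ffunE. Qed.

Section Intervention.
Variables (F : sys) (xs : interv) (s : assign).
Hypotheses (wfF : wf_sys Ran F) (ins : inr Ran s) (okx : interv_inr xs).

Lemma inr_step t : inr Ran t -> inr Ran (step F xs s t).
Proof.
move=> it; apply/inrP => v; rewrite stepE.
case E: (look xs v) => [x|]; first exact: look_inr E.
case ev: (v \in en F); last exact/inrP.
by case: (wf_endogenous wfF ev it) => y ->.
Qed.

Lemma step_agree t1 t2 v : inr Ran t1 -> inr Ran t2 -> agree_on (pa F v) t1 t2 ->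
  step F xs s t1 v = step F xs s t2 v.
Proof.
move=> i1 i2 ag; rewrite !stepE; case: (look xs v) => //.
case ev: (v \in en F) => //; rewrite -(wf_fn_agree wfF ag).
by case: (wf_endogenous wfF ev i1) => y ->.
Qed.

Lemma inr_iter_step n : inr Ran (iter n (step F xs s) s).
Proof. by elim: n => //= n IH; apply: inr_step. Qed.

Lemma iter_step_stable v m n : #|ancestors F v| <= m <= n ->
  iter n (step F xs s) s v = iter m (step F xs s) s v.
Proof.
elim/(ancestors_ind wfF): v m n => v IH [|m] [|n] /andP[hm mn] //.
  by move: (card_ancestors_gt0 F v); rewrite leqNgt ltnS hm.
apply: step_agree; rewrite ?inr_iter_step //; apply/agree_onP => u uv.
apply: (IH _ uv); apply/andP; split=> //.
by rewrite -ltnS (leq_trans (card_ancestors_pa wfF uv)).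
Qed.

Lemma inr_doint : inr Ran (doint F xs s).
Proof. exact: inr_iter_step. Qed.

Lemma step_doint : step F xs s (doint F xs s) = doint F xs s.
Proof.
apply/ffunP => v; rewrite -iterS; apply: iter_step_stable.
by rewrite max_card leqnSn.
Qed.

Lemma doint_unique u : inr Ran u -> step F xs s u = u -> doint F xs s = u.
Proof.
move=> iu fu; apply/ffunP; elim/(ancestors_ind wfF) => v IH.
rewrite -step_doint -fu; apply: step_agree => //; first exact: inr_doint.
exact/agree_onP.
Qed.

End Intervention.

Lemma en_restr (F : sys) (xs : interv) : en (restr F xs) = en F :\: ivars xs.
Proof. by []. Qed.

Lemma pa_restr (F : sys) (xs : interv) v :
  pa (restr F xs) v = if v \in ivars xs then set0 else pa F v.
Proof. by rewrite /pa ffunE. Qed.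

Lemma fn_restr (F : sys) (xs : interv) v t :
  fn (restr F xs) v t = if v \in ivars xs then None else fn F v t.
Proof. by rewrite /fn ffunE; case: ifP; rewrite ?ffunE. Qed.

Lemma wf_restr (F : sys) (xs : interv) : wf_sys Ran F -> wf_sys Ran (restr F xs).
Proof.
move=> wf; case/and5P: (wf) => _ _ /forallP wfen _ _.
apply/and5P; split; apply/forallP => v.
- by rewrite pa_restr; case: ifP => _; rewrite ?inE ?wf_notin_pa.
- apply/implyP; rewrite en_restr in_setD negb_and negbK pa_restr => vX.
  have [iv|niv] := boolP (v \in ivars xs).
    by rewrite eqxx; apply/forallP => t; rewrite fn_restr iv.
  rewrite (negbTE niv) /= in vX *.
  case/and5P: wf => _ /forallP /(_ v) + _ _ _; rewrite vX /=.
  by case/andP=> -> /forallP H; apply/forallP => t; rewrite fn_restr (negbTE niv) H.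
- apply/implyP; rewrite en_restr in_setD => /andP[niv ev].
  apply/forallP => t; rewrite pa_restr fn_restr (negbTE niv).
  by move: (wfen v); rewrite ev => /forallP.
- apply/forallP => t; apply/forallP => t'; apply/implyP.
  by rewrite pa_restr !fn_restr; case: ifP => // _ /(wf_fn_agree wf) ->.
- apply/forallP => u; apply/implyP; rewrite pa_restr.
  case: ifP => [_|_ uv]; first by rewrite inE.
  have sub : subrel (parent_rel (restr F xs)) (connect (parent_rel F)).
    move=> x y; rewrite /parent_rel pa_restr; case: ifP => [_|_ xy]; rewrite ?inE //.
    exact: (@connect1 _ (parent_rel F)).
  by apply/negP => /(connect_sub sub) C; move: (wf_acyclic wf uv); rewrite C.
Qed.

(** * Equivalence of systems *)

Definition mix (A : {set V}) (t t' : assign) : assign :=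
  [ffun u => if u \in A then t u else t' u].

Lemma inr_mix A t t' : inr Ran t -> inr Ran t' -> inr Ran (mix A t t').
Proof. by move=> /inrP h /inrP h'; apply/inrP => v; rewrite ffunE; case: ifP. Qed.

Lemma agree_mix A B t t' : agree_on (A :&: B) t t' ->
  agree_on A t (mix A t t') /\ agree_on B (mix A t t') t'.
Proof.
move/agree_onP => ag; split; apply/agree_onP => u uX; rewrite ffunE ?uX //.
by case: ifP => // uA; apply: ag; rewrite inE uA.
Qed.

Lemma simfn_eq (F G : sys) v t : simfn Ran F G v -> inr Ran t -> fn F v t = fn G v t.
Proof. by move=> /simfnP H it; apply: H => //; apply/agree_onP. Qed.

Lemma simfn_of_eq (F G : sys) v : wf_sys Ran F -> wf_sys Ran G ->
  (forall t, inr Ran t -> fn F v t = fn G v t) -> simfn Ran F G v.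
Proof.
move=> wF wG H; apply/simfnP => t t' it it' /agree_mix[agF agG].
by rewrite (wf_fn_agree wF agF) H ?inr_mix // (wf_fn_agree wG agG).
Qed.

Lemma simfn_sym (F G : sys) v : simfn Ran F G v -> simfn Ran G F v.
Proof.
move/simfnP => H; apply/simfnP => t t' it it' ag; symmetry; apply: H => //.
by apply/agree_onP => u; rewrite setIC => /(agree_onP _ _ _ ag).
Qed.

Lemma simfn_trans (F G H : sys) v : simfn Ran F G v -> simfn Ran G H v -> simfn Ran F H v.
Proof.
move=> /simfnP h1 /simfnP h2; apply/simfnP => t t' it it' ag.
have [agF agH] := agree_mix (B := pa H v) ag.
rewrite (h1 t (mix (pa F v) t t')) ?inr_mix //; last first.
  by apply/agree_onP => u /setIP[uF _]; apply: (agree_onP _ _ _ agF).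
apply: h2 => //; first exact: inr_mix.
by apply/agree_onP => u /setIP[_ uH]; apply: (agree_onP _ _ _ agH).
Qed.

Lemma simsys_refl (F : sys) : wf_sys Ran F -> simsys Ran F F.
Proof. by move=> wf; apply/simsysP; split=> // v _; apply: simfn_of_eq. Qed.

Lemma simsys_sym (F G : sys) : simsys Ran F G -> simsys Ran G F.
Proof.
by case/simsysP => E H; apply/simsysP; split=> // v; rewrite -E => /H /simfn_sym.
Qed.

Lemma simsys_trans (F G H : sys) : simsys Ran F G -> simsys Ran G H -> simsys Ran F H.
Proof.
case/simsysP => E1 h1 /simsysP [E2 h2]; apply/simsysP; split; first by rewrite E1.
by move=> v vF; apply: simfn_trans (h1 _ vF) (h2 _ _); rewrite -E1.
Qed.

Lemma encn_restr (F : sys) (xs : interv) v :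
  (v \in encn Ran (restr F xs)) = (v \notin ivars xs) && (v \in encn Ran F).
Proof.
rewrite !encnE /cnst en_restr in_setD.
case iv: (v \in ivars xs) => //=; case: (v \in en F) => //=.
by congr (~~ _); apply: eq_forallb => t; apply: eq_forallb => t'; rewrite !fn_restr iv.
Qed.

Lemma simsys_restr (F G : sys) (xs : interv) :
  simsys Ran F G -> simsys Ran (restr F xs) (restr G xs).
Proof.
case/simsysP => E H; apply/simsysP; split.
  by apply/setP => v; rewrite !encn_restr E.
move=> v; rewrite encn_restr => /andP[niv /H /simfnP HF].
by apply/simfnP => t t'; rewrite !pa_restr !fn_restr (negbTE niv); apply: HF.
Qed.

Section StateIntervention.
Variables (F : sys) (xs : interv) (s : assign).
Hypotheses (wf : wf_sys Ran F) (ins : inr Ran s) (cs : compat F s) (ok : interv_inr xs).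

Lemma fn_cnst v t : v \in en F -> cnst Ran F v -> inr Ran t -> fn F v t = Some (s v).
Proof. by move=> ev /(cnstP ev) c it; rewrite (c t s) // (compatP _ _ cs). Qed.

(* Outside [encn F], an unintervened variable keeps its value: it is either
   exogenous or has a constant function, which [s] already satisfies. *)
Lemma doint_notin_encn w :
  look xs w = None -> w \notin encn Ran F -> doint F xs s w = s w.
Proof.
move=> lw; rewrite -(step_doint wf ins ok) stepE lw encnE negb_and negbK.
case ev: (w \in en F) => //= c.
by rewrite (fn_cnst ev c) // inr_doint.
Qed.

Lemma compat_doint : compat (restr F xs) (doint F xs s).
Proof.
apply/compatP => v; rewrite en_restr in_setD => /andP[niv ev].
rewrite fn_restr (negbTE niv).
have /eqP lv : look xs v == None by rewrite look_None.
have [y E _] := wf_endogenous wf ev (inr_doint wf ins ok).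
by rewrite -{2}(step_doint wf ins ok) stepE lv ev E.
Qed.

End StateIntervention.

Lemma state_doint (s : assign) (F : sys) (xs : interv) : interv_inr xs ->
  state Ran s F -> state Ran (doint F xs s) (restr F xs).
Proof.
move=> ok /stateP [ins wf cs]; apply/stateP; split.
- exact: inr_doint.
- exact: wf_restr.
- exact: compat_doint.
Qed.

Lemma doint_simsys (F G : sys) (xs : interv) (s : assign) :
  state Ran s F -> state Ran s G -> simsys Ran F G -> interv_inr xs ->
  doint F xs s = doint G xs s.
Proof.
move=> /stateP[ins wfF cF] /stateP[_ wfG cG] /simsysP[E H] ok.
have iu := inr_doint wfF ins ok; have /ffunP fixF := step_doint wfF ins ok.
symmetry; apply: (doint_unique wfG ins ok iu); apply/ffunP => w.
rewrite stepE; case lw: (look xs w) => [x|].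
  by rewrite -fixF stepE lw.
have [wG|nwG] := boolP (w \in encn Ran G); last first.
  rewrite doint_notin_encn ?E //; case eG: (w \in en G) => //.
  by move: nwG; rewrite encnE eG negbK => /(fn_cnst ins cG eG) -> //.
have wF : w \in encn Ran F by rewrite E.
move: (wG); rewrite encnE => /andP[-> _]; rewrite -(simfn_eq (H _ wF) iu).
move: wF; rewrite encnE => /andP[eF _].
by rewrite -[RHS]fixF stepE lw eF.
Qed.

(** * Generalized teams *)

Local Notation pair := (assign * sys)%type.

Definition simstate (p q : pair) : bool := (p.1 == q.1) && simsys Ran p.2 q.2.

Definition simteam (S T : {set pair}) : Prop :=
  (forall p, p \in S -> exists2 q, q \in T & simstate p q) /\
  (forall q, q \in T -> exists2 p, p \in S & simstate p q).

Definition sim_part (S T : {set pair}) : {set pair} :=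
  [set q in T | [exists p in S, simstate p q]].

Lemma gteamP (T : {set pair}) :
  reflect (forall p, p \in T -> state Ran p.1 p.2) (gteam Ran T).
Proof.
apply: (iffP forallP) => H p; first by move=> pT; move: (H p); rewrite pT.
by apply/implyP => /H.
Qed.

Lemma gteam_sub (S T : {set pair}) : gteam Ran T -> S \subset T -> gteam Ran S.
Proof. by move=> /gteamP H /subsetP sub; apply/gteamP => p /sub /H. Qed.

Lemma simstate_refl p : state Ran p.1 p.2 -> simstate p p.
Proof. by case/stateP=> _ wf _; rewrite /simstate eqxx simsys_refl. Qed.

Lemma simstate_sym p q : simstate p q -> simstate q p.
Proof. by rewrite /simstate => /andP[/eqP -> /simsys_sym ->]; rewrite eqxx. Qed.

Lemma simstate_trans p q r : simstate p q -> simstate q r -> simstate p r.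
Proof.
rewrite /simstate => /andP[/eqP -> h1] /andP[/eqP -> h2].
by rewrite eqxx (simsys_trans h1 h2).
Qed.

Lemma simteam_refl S : gteam Ran S -> simteam S S.
Proof.
by move/gteamP=> H; split=> p pS; exists p => //; apply/simstate_refl/H.
Qed.

Lemma simteam_sym S T : simteam S T -> simteam T S.
Proof.
by case=> h1 h2; split=> p /[dup] pT => [/h2|/h1] [q qS /simstate_sym]; exists q.
Qed.

Lemma simteam_trans S T U : simteam S T -> simteam T U -> simteam S U.
Proof.
case=> h1 h2 [h3 h4]; split=> p.
  case/h1=> q /h3 [r rU m2 m1]; exists r => //; exact: simstate_trans m1 m2.
case/h4=> q /h2 [r rS m2 m1]; exists r => //; exact: simstate_trans m2 m1.
Qed.

Lemma simteam1 p q : simstate p q -> simteam [set p] [set q].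
Proof. by move=> m; split=> x /set1P ->; [exists q|exists p]; rewrite ?inE. Qed.

Lemma sim_part_sub (S T : {set pair}) : sim_part S T \subset T.
Proof. by apply/subsetP => q /setIdP[]. Qed.

Lemma simteam_sim_part (S T : {set pair}) :
  (forall p, p \in S -> exists2 q, q \in T & simstate p q) ->
  simteam S (sim_part S T).
Proof.
move=> cov; split=> [p pS|q /setIdP[_ /exists_inP[p pS m]]]; last by exists p.
have [q qT m] := cov p pS; exists q => //.
by rewrite inE qT; apply/exists_inP; exists p.
Qed.

Lemma simteam_setU (S1 S2 T : {set pair}) : simteam (S1 :|: S2) T ->
  sim_part S1 T :|: sim_part S2 T = T /\
  simteam S1 (sim_part S1 T) /\ simteam S2 (sim_part S2 T).
Proof.
case=> h1 h2; split.
  apply/setP => q; rewrite !inE -andb_orr; apply/andb_idr => /h2[p /setUP[] pS m].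
    by apply/orP; left; apply/exists_inP; exists p.
  by apply/orP; right; apply/exists_inP; exists p.
by split; apply: simteam_sim_part => p pS; apply: h1; rewrite inE pS ?orbT.
Qed.

Lemma geqv_simteam (S T : {set pair}) : gteam Ran S -> gteam Ran T ->
  geqv Ran S T <-> simteam S T.
Proof.
move=> /gteamP gS /gteamP gT; split=> [H|[h1 h2] F wF].
  have mem (U : {set pair}) p : p \in U -> state Ran p.1 p.2 -> p.1 \in gproj Ran U p.2.
    move=> pU /stateP[_ wp _]; apply/imsetP; exists p => //.
    by rewrite inE pU simsys_refl.
  split=> [p pS|q qT].
    move: (mem _ _ pS (gS p pS)); rewrite H; last by case/stateP: (gS p pS).
    case/imsetP=> q /setIdP[qT sq] E; exists q => //.
    by rewrite /simstate E eqxx simsys_sym.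
  move: (mem _ _ qT (gT q qT)); rewrite -H; last by case/stateP: (gT q qT).
  case/imsetP=> p /setIdP[pS sp] E; exists p => //.
  by rewrite /simstate E eqxx sp.
apply/setP => x; apply/imsetP/imsetP => -[p /setIdP[pU sp] ->].
  case: (h1 p pU) => q qT /andP[/eqP E m]; exists q; last by [].
  by rewrite inE qT (simsys_trans (simsys_sym m) sp).
case: (h2 p pU) => q qT /andP[/eqP E m]; exists q; last by [].
by rewrite inE qT (simsys_trans m sp).
Qed.

Lemma sat_g_set0 (f : fml) : sat_g f set0.
Proof.
elim: f => //= [X x p|Xs Y p p'|a _ p|a IHa b IHb|a IHa b IHb|xs a IHa _].
- by rewrite inE.
- by rewrite inE.
- by rewrite inE.
- by exists set0, set0; rewrite setU0.
- by left.
- by rewrite imset0.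
Qed.

Lemma sat_g_subset (f : fml) (S T : {set pair}) : S \subset T -> sat_g f T -> sat_g f S.
Proof.
elim: f S T => /= [X x|Xs Y|a _|a IHa b IHb|a IHa b IHb|a IHa b IHb|xs a IH] S T sub.
- by move=> H p /(subsetP sub); apply: H.
- by move=> H p p' /(subsetP sub) pT /(subsetP sub); apply: H.
- by move=> H p /(subsetP sub); apply: H.
- by case=> Ha Hb; split; [apply: IHa Ha|apply: IHb Hb].
- case=> T1 [T2 [E [H1 H2]]]; exists (T1 :&: S), (T2 :&: S).
  rewrite -setIUl E (setIidPr sub); split=> //.
  by split; [apply: IHa H1|apply: IHb H2]; apply: subsetIl.
- by case=> H; [left; apply: IHa H|right; apply: IHb H].
- by move=> H c; apply: IH (H c); apply: imsetS.
Qed.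

Definition intervene (xs : interv) (p : pair) : pair := (doint p.2 xs p.1, restr p.2 xs).

Lemma gteam_intervene xs T : interv_inr xs -> gteam Ran T ->
  gteam Ran [set intervene xs p | p in T].
Proof.
move=> ok /gteamP H; apply/gteamP => q /imsetP [p pT ->].
exact/state_doint/H.
Qed.

Lemma simstate_intervene xs p q : interv_inr xs ->
  state Ran p.1 p.2 -> state Ran q.1 q.2 ->
  simstate p q -> simstate (intervene xs p) (intervene xs q).
Proof.
move=> ok sp sq /andP[/eqP E sm]; rewrite /simstate /= simsys_restr // andbT.
by rewrite E in sp *; rewrite (doint_simsys sp sq sm ok).
Qed.

Lemma simteam_intervene xs S T : interv_inr xs -> gteam Ran S -> gteam Ran T ->
  simteam S T -> simteam [set intervene xs p | p in S] [set intervene xs p | p in T].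
Proof.
move=> ok /gteamP gS /gteamP gT [h1 h2]; split.
  move=> _ /imsetP [p pS ->]; case: (h1 p pS) => q qT m.
  by exists (intervene xs q); [apply: imset_f|apply: simstate_intervene; auto].
move=> _ /imsetP [q qT ->]; case: (h2 q qT) => p pS m.
by exists (intervene xs p); [apply: imset_f|apply: simstate_intervene; auto].
Qed.

Lemma sat_g_simteam (f : fml) (S T : {set pair}) : wff Ran f ->
  gteam Ran S -> gteam Ran T -> simteam S T -> sat_g f S -> sat_g f T.
Proof.
elim: f S T => /= [X x|Xs Y|a IH|a IHa b IHb|a IHa b IHb|a IHa b IHb|xs a IH] S T.
- by move=> _ _ _ [_ h2] H q /h2 [p /H <- /andP[/eqP ->]].
- move=> _ _ _ [_ h2] H q q' /h2 [p pS /andP[/eqP <- _]] /h2 [p' p'S /andP[/eqP <- _]].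
  exact: H.
- move=> wa gS gT [_ h2] H q qT Hq; have [p pS m] := h2 q qT.
  apply: (H p pS); apply: (IH [set q]) => //.
  + by apply: gteam_sub gT _; rewrite sub1set.
  + by apply: gteam_sub gS _; rewrite sub1set.
  + exact/simteam1/simstate_sym.
- by case/andP=> wa wb gS gT sm [Ha Hb]; split; [apply: IHa Ha|apply: IHb Hb].
- case/andP=> wa wb gS gT sm [S1 [S2 [E [H1 H2]]]].
  rewrite -E in sm gS; have [ET [sm1 sm2]] := simteam_setU sm.
  have gpart U : gteam Ran (sim_part U T) by apply: gteam_sub gT (sim_part_sub _ _).
  exists (sim_part S1 T), (sim_part S2 T); split=> //; split.
    by apply: (IHa S1) => //; apply: gteam_sub gS (subsetUl _ _).
  by apply: (IHb S2) => //; apply: gteam_sub gS (subsetUr _ _).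
- by case/andP=> wa wb gS gT sm [H|H]; [left; apply: IHa H|right; apply: IHb H].
- case/andP=> ok wa gS gT sm H c.
  apply: (IH [set intervene xs p | p in S]); rewrite ?gteam_intervene //.
    exact: simteam_intervene.
  exact: H.
Qed.

Lemma g_defines_closed (K : {set pair} -> Prop) (f : fml) : gt_class Ran K -> wff Ran f ->
  g_defines Ran K f -> g_downward K /\ g_eqclosed Ran K.
Proof.
move=> cK wf Kf; split=> [T S KT sub|T S KT gS /geqv_simteam sm].
  have gT := cK T KT; apply/(Kf S (gteam_sub gT sub)).
  by apply: sat_g_subset sub _; apply/(Kf T gT).
have gT := cK T KT; apply/(Kf S gS).
by apply: (sat_g_simteam wf gT gS (sm gT gS)); apply/(Kf T gT).
Qed.

(** * Causal teams as generalized teams *)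

Definition lift_team (S : {set assign}) (G : sys) : {set pair} := [set (s, G) | s in S].

Lemma lift_team1 s G : lift_team [set s] G = [set (s, G)].
Proof. exact: imset_set1. Qed.

Lemma lift_teamU S1 S2 G : lift_team (S1 :|: S2) G = lift_team S1 G :|: lift_team S2 G.
Proof. exact: imsetU. Qed.

Lemma lift_team_fst (T : {set pair}) S G :
  T \subset lift_team S G -> T = lift_team [set p.1 | p in T] G.
Proof.
move/subsetP => sub; apply/setP => p; apply/idP/imsetP.
  move=> pT; case/imsetP: (sub p pT) => s sS E.
  by exists s => //; apply/imsetP; exists p => //; rewrite E.
case=> s /imsetP [q qT ->] ->; case/imsetP: (sub q qT) => s' _ E.
by rewrite E /= -E.
Qed.

Lemma fst_lift_team S G : [set p.1 | p in lift_team S G] = S.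
Proof.
apply/setP => s; apply/imsetP/idP => [[p /imsetP [s' s'S ->] ->] //|sS].
by exists (s, G) => //; apply: imset_f.
Qed.

Lemma intervene_lift_team xs S G : [set intervene xs p | p in lift_team S G] =
  lift_team [set doint G xs s | s in S] (restr G xs).
Proof.
apply/setP => p; apply/imsetP/imsetP => [[_ /imsetP [s sS ->] ->]|[_ /imsetP [s sS ->] ->]].
  by exists (doint G xs s) => //; apply: imset_f.
by exists (s, G) => //; apply: imset_f.
Qed.

Lemma sat_c_lift (f : fml) (S : {set assign}) (G : sys) :
  sat_c f S G <-> sat_g f (lift_team S G).
Proof.
elim: f S G => /= [X x|Xs Y|a IH|a IHa b IHb|a IHa b IHb|a IHa b IHb|xs a IH] S G.
- split=> H; first by move=> _ /imsetP [s sS ->]; apply: H.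
  by move=> s sS; apply: (H (s, G)); apply: imset_f.
- split=> H; first by move=> _ _ /imsetP [s sS ->] /imsetP [s' s'S ->]; apply: H.
  by move=> s s' sS s'S; apply: (H (s, G) (s', G)); apply: imset_f.
- split=> H; first by move=> _ /imsetP [s sS ->]; rewrite -lift_team1 -IH; apply: H.
  by move=> s sS; rewrite IH lift_team1; apply: H; apply: imset_f.
- by rewrite IHa IHb.
- split=> [[S1 [S2 [E [H1 H2]]]]|[T1 [T2 [E [H1 H2]]]]].
    by exists (lift_team S1 G), (lift_team S2 G); rewrite -lift_teamU E -IHa -IHb.
  have /lift_team_fst E1 : T1 \subset lift_team S G by rewrite -E subsetUl.
  have /lift_team_fst E2 : T2 \subset lift_team S G by rewrite -E subsetUr.
  exists [set p.1 | p in T1], [set p.1 | p in T2].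
  by rewrite -imsetU E fst_lift_team IHa IHb -E1 -E2.
- by rewrite IHa IHb.
- split=> H c; last by rewrite IH -intervene_lift_team; apply: H.
  by rewrite intervene_lift_team -IH; apply: H.
Qed.

Lemma cteamP (T : {set assign} * sys) :
  reflect (wf_sys Ran T.2 /\ {in T.1, forall s, state Ran s T.2}) (cteam Ran T).
Proof.
apply: (iffP andP) => [[w /forall_inP H]|[w H]]; split=> //.
  by move=> s /H /andP[i c]; apply/stateP.
by apply/forall_inP => s /H /stateP[-> _ ->].
Qed.

Lemma gteam_lift (T : {set assign} * sys) : cteam Ran T -> gteam Ran (lift_team T.1 T.2).
Proof. by case/cteamP => w H; apply/gteamP => _ /imsetP [s sT ->]; apply: H. Qed.

Lemma c_defines_closed (K : {set assign} * sys -> Prop) (f : fml) :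
  ct_class Ran K -> wff Ran f -> c_defines Ran K f -> c_downward K /\ c_eqclosed Ran K.
Proof.
move=> [cK _] wf Kf; split=> [T S KT E sub|T S KT cS _ E sm].
  have cT := cK T KT.
  have cS : cteam Ran S.
    case/cteamP: cT => w H; apply/cteamP; rewrite E; split=> // s /(subsetP sub).
    exact: H.
  apply/(Kf S cS)/sat_c_lift; rewrite E.
  by apply: sat_g_subset (imsetS _ sub) _; apply/sat_c_lift/(Kf T cT).
have cT := cK T KT; apply/(Kf S cS)/sat_c_lift.
apply: (sat_g_simteam wf (gteam_lift cT) (gteam_lift cS)); last exact/sat_c_lift/(Kf T cT).
split=> _ /imsetP [s sX ->].
  by exists (s, S.2); rewrite /simstate ?eqxx ?sm // imset_f // -E.
by exists (s, T.2); rewrite /simstate ?eqxx ?sm // imset_f // E.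
Qed.

Lemma simteam_lift_mem (T : {set pair}) S G p : simteam T (lift_team S G) -> p \in T ->
  p.1 \in S /\ simsys Ran p.2 G.
Proof. by case=> h1 _ /h1 [_ /imsetP [s sS ->] /andP[/eqP -> sm]]. Qed.

Lemma simteam_lift_fst S1 S2 G1 G2 :
  simteam (lift_team S1 G1) (lift_team S2 G2) -> S1 = S2.
Proof.
move=> sm; apply/setP => s; apply/idP/idP => sS.
  by case: (simteam_lift_mem sm (imset_f (fun s => (s, G1)) sS)).
case: sm => _ /(_ _ (imset_f (fun s => (s, G2)) sS)) [_ /imsetP [s' s'S ->]].
by case/andP=> /eqP /= <-.
Qed.

Section CausalClass.
Variable K : {set assign} * sys -> Prop.
Hypotheses (cK : ct_class Ran K) (Kd : c_downward K) (Ke : c_eqclosed Ran K).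

Definition lift_class (T : {set pair}) : Prop :=
  gteam Ran T /\ exists S G, K (S, G) /\ simteam T (lift_team S G).

Lemma lift_team_class (T : {set assign} * sys) : K T -> lift_class (lift_team T.1 T.2).
Proof.
move=> KT; have gT := gteam_lift (cK.1 T KT); split=> //.
by exists T.1, T.2; rewrite -surjective_pairing; split=> //; apply: simteam_refl.
Qed.

Lemma lift_classE (T : {set assign} * sys) :
  cteam Ran T -> K T <-> lift_class (lift_team T.1 T.2).
Proof.
move=> cT; split=> [|[_ [S [G [KSG sm]]]]]; first exact: lift_team_class.
have ES := simteam_lift_fst sm.
have [T0|/set0Pn [s sT]] := eqVneq T.1 set0.
  rewrite [T]surjective_pairing T0; apply: cK.2 (Kd KSG _ _) _; rewrite ?sub0set //.
  by case/cteamP: cT.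
have [_ smG] := simteam_lift_mem sm (imset_f (fun s => (s, T.2)) sT).
apply: Ke KSG cT _ _ (simsys_sym smG) => /=; rewrite -ES //.
by apply/set0Pn; exists s.
Qed.

Lemma lift_class_closed : g_downward lift_class /\ g_eqclosed Ran lift_class.
Proof.
split=> [T T' [gT [S [G [KSG sm]]]] sub|T T' [gT [S [G [KSG sm]]]] gT' /geqv_simteam eqv].
  have mem p : p \in T' -> p.1 \in S /\ simsys Ran p.2 G.
    by move=> /(subsetP sub); apply: simteam_lift_mem.
  split; first exact: gteam_sub gT sub.
  exists [set p.1 | p in T'], G; split.
    by apply: (Kd KSG) => //; apply/subsetP => _ /imsetP [p /mem[pS _] ->].
  split=> [p pT'|_ /imsetP [_ /imsetP [p pT' ->] ->]]; last first.
    by exists p; rewrite // /simstate eqxx; case: (mem p pT').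
  exists (p.1, G); first by do 2!apply: imset_f.
  by rewrite /simstate eqxx; case: (mem p pT').
split=> //; exists S, G; split=> //.
exact: simteam_trans (simteam_sym (eqv gT gT')) sm.
Qed.

Lemma c_defines_of_lift f : g_defines Ran lift_class f -> c_defines Ran K f.
Proof. by move=> Kf T cT; rewrite (lift_classE cT) sat_c_lift; apply/Kf/gteam_lift. Qed.

End CausalClass.

(** * Characteristic formulas *)

Section Formulas.
Variables (v0 : V) (x0 : Val).
Hypothesis x0_inr : x0 \in Ran v0.

Definition fbot : fml := FAnd (FEq v0 x0) (FNeg (FEq v0 x0)).
Definition ftop : fml := FNeg fbot.
Definition fAnds (l : seq fml) : fml := foldr FAnd ftop l.
Definition fOrs (l : seq fml) : fml := foldr FOr fbot l.
Definition fGOrs (l : seq fml) : fml := foldr FGOr fbot l.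

Lemma sat_fbot (T : {set pair}) : sat_g fbot T <-> T = set0.
Proof.
split=> [[H1 H2]|->]; last exact: sat_g_set0.
apply/setP => p; rewrite inE; apply/negP => pT.
by apply: (H2 p pT) => q /set1P ->; apply: H1.
Qed.

Lemma sat_ftop (T : {set pair}) : sat_g ftop T.
Proof. by move=> p _ /sat_fbot /setP /(_ p); rewrite !inE eqxx. Qed.

Lemma sat_fAnds (I : eqType) (g : I -> fml) (s : seq I) (T : {set pair}) :
  sat_g (fAnds (map g s)) T <-> {in s, forall x, sat_g (g x) T}.
Proof.
elim: s => [|x s IH] /=; first by split=> // _; apply: sat_ftop.
rewrite IH; split=> [[h1 h2] y|H]; first by rewrite in_cons => /predU1P[->|/h2].
by split=> [|y ys]; apply: H; rewrite in_cons ?eqxx ?ys ?orbT.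
Qed.

Lemma sat_fGOrs (I : eqType) (g : I -> fml) (s : seq I) (T : {set pair}) :
  sat_g (fGOrs (map g s)) T <-> T = set0 \/ exists2 x, x \in s & sat_g (g x) T.
Proof.
elim: s => [|x s IH].
  by split=> [/sat_fbot|[->|[]//]]; [left|exact: sat_g_set0].
rewrite [fGOrs _]/= [sat_g (FGOr _ _) _]/= IH.
split=> [[H|[->|[y ys H]]]|[->|[y]]].
- by right; exists x; rewrite ?mem_head.
- by left.
- by right; exists y; rewrite // in_cons ys orbT.
- by right; left.
- by rewrite in_cons => /predU1P[->|ys H]; [left|right; right; exists y].
Qed.

Lemma sat_FOr1 a b (p : pair) :
  sat_g (FOr a b) [set p] <-> sat_g a [set p] \/ sat_g b [set p].
Proof.
split=> [[T1 [T2 [E [H1 H2]]]]|[H|H]].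
- have : p \in T1 :|: T2 by rewrite E set11.
  case/setUP=> pT; [left; apply: sat_g_subset H1|right; apply: sat_g_subset H2];
    by rewrite sub1set.
- by exists [set p], set0; rewrite setU0; do !split=> //; apply: sat_g_set0.
- by exists set0, [set p]; rewrite set0U; do !split=> //; apply: sat_g_set0.
Qed.

Lemma sat_FNeg1 a (p : pair) : sat_g (FNeg a) [set p] <-> ~ sat_g a [set p].
Proof. by split=> [|H q /set1P ->]; [apply; rewrite set11|]. Qed.

Lemma sat_FEq1 X x (p : pair) : sat_g (FEq X x) [set p] <-> p.1 X = x.
Proof. by split=> [|H q /set1P ->]; [apply; rewrite set11|]. Qed.

Lemma sat_FCf1 xs a (p : pair) : consistent xs ->
  sat_g (FCf xs a) [set p] <-> sat_g a [set intervene xs p].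
Proof. by move=> c; rewrite /= imset_set1; split=> [|H _]; [apply|]. Qed.

Lemma sat_g_flat f (T : {set pair}) :
  isCO f -> sat_g f T <-> {in T, forall p, sat_g f [set p]}.
Proof.
elim: f T => //= [X x|a IH|a IHa b IHb|a IHa b IHb|xs a IH] T.
- by move=> _; split=> [H p pT q /set1P ->|H p pT];
    [apply: H|apply: (H p pT); rewrite set11].
- by move=> _; split=> [H p pT q /set1P ->|H p pT];
    [apply: H|apply: (H p pT); rewrite set11].
- case/andP=> /IHa {}IHa /IHb {}IHb; rewrite !IHa !IHb.
  split=> [[h1 h2] p pT|H]; first by split; [apply/IHa|apply/IHb] => q /set1P ->;
    [apply: h1|apply: h2].
  by split=> p pT; have [/IHa ha /IHb hb] := H p pT; [apply: ha|apply: hb]; rewrite set11.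
- case/andP=> ca cb; split.
    case=> T1 [T2 [E [H1 H2]]] p; rewrite -E => /setUP[] pT; apply/sat_FOr1;
      [left; apply: sat_g_subset H1|right; apply: sat_g_subset H2]; by rewrite sub1set.
  move=> H; exists [set p in T | `[< sat_g a [set p] >]],
                  [set p in T | ~~ `[< sat_g a [set p] >]].
  split; first by apply/setP => p; rewrite !inE -andb_orr orbN andbT.
  split; [apply/(IHa _ ca)|apply/(IHb _ cb)] => p /setIdP[pT]; first by move/asboolP.
  by move/asboolPn => na; case/sat_FOr1: (H p pT).
- move=> ca; split=> [H p pT c|H c].
    rewrite imset_set1; apply/(IH _ ca) => _ /set1P ->.
    by move/(IH _ ca): (H c); apply; apply: imset_f.
  by apply/(IH _ ca) => _ /imsetP [p pT ->]; move: (H p pT c); rewrite imset_set1.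
Qed.

Lemma isCO_fAnds (l : seq fml) : isCO (fAnds l) = all isCO l.
Proof. by elim: l => //= f l ->. Qed.
Lemma isCO_fOrs (l : seq fml) : isCO (fOrs l) = all isCO l.
Proof. by elim: l => //= f l ->. Qed.
Lemma isCOD_fAnds (l : seq fml) : isCOD (fAnds l) = all isCOD l.
Proof. by elim: l => //= f l ->. Qed.
Lemma isCOsq_fGOrs (l : seq fml) : isCOsq (fGOrs l) = all isCOsq l.
Proof. by elim: l => //= f l ->. Qed.
Lemma wff_fAnds (l : seq fml) : wff Ran (fAnds l) = all (wff Ran) l.
Proof. by elim: l => /= [|f l ->]; rewrite ?x0_inr. Qed.
Lemma wff_fOrs (l : seq fml) : wff Ran (fOrs l) = all (wff Ran) l.
Proof. by elim: l => /= [|f l ->]; rewrite ?x0_inr. Qed.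
Lemma wff_fGOrs (l : seq fml) : wff Ran (fGOrs l) = all (wff Ran) l.
Proof. by elim: l => /= [|f l ->]; rewrite ?x0_inr. Qed.

Lemma isCO_COsq (f : fml) : isCO f -> isCOsq f.
Proof. by elim: f => //= [a IHa b IHb|a IHa b IHb] /andP[/IHa -> /IHb ->]. Qed.

Definition inr_assigns : seq assign := [seq t <- enum {ffun V -> Val} | inr Ran t].

Lemma mem_inr_assigns t : (t \in inr_assigns) = inr Ran t.
Proof. by rewrite mem_filter mem_enum andbT. Qed.

Lemma look_graph (t : assign) (l : seq V) w :
  look [seq (u, t u) | u <- l] w = if w \in l then Some (t w) else None.
Proof.
elim: l => [|u l IH] //; move: IH; rewrite /look /= in_cons eq_sym.
by case: eqP => [->|_].
Qed.

Definition fix_others (t : assign) (v : V) : interv :=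
  [seq (u, t u) | u <- enum V & u != v].

Lemma look_fix_others t v w :
  look (fix_others t v) w = if w == v then None else Some (t w).
Proof. by rewrite look_graph mem_filter mem_enum andbT; case: (w == v). Qed.

Lemma interv_inr_fix_others t v : inr Ran t -> interv_inr (fix_others t v).
Proof.
move/inrP => it; rewrite /interv_inr /fix_others all_map.
by apply/allP => u _ /=.
Qed.

Lemma consistent_fix_others t v : consistent (fix_others t v).
Proof.
rewrite /consistent /fix_others all_map; apply/allP => u _.
rewrite /= all_map; apply/allP => u' _ /=.
by apply/implyP => /eqP ->.
Qed.

(* The value of [v] in [(s, G)] after the intervention [fix_others t v]. *)
Definition response (G : sys) (v : V) (t s : assign) : Val :=
  if v \in encn Ran G then odflt (s v) (fn G v t) else s v.

Lemma fn_response (G : sys) v t s : wf_sys Ran G -> v \in encn Ran G -> inr Ran t ->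
  fn G v t = Some (response G v t s).
Proof.
rewrite /response => wf vG it; rewrite vG; move: vG; rewrite encnE => /andP[ev _].
by have [y -> _] := wf_endogenous wf ev it.
Qed.

Lemma doint_fix_others G s t v : state Ran s G -> inr Ran t ->
  doint G (fix_others t v) s v = response G v t s.
Proof.
case/stateP => ins wf cs it.
pose u : assign := [ffun w => if w == v then response G v t s else t w].
suff -> : doint G (fix_others t v) s = u by rewrite ffunE eqxx.
have resp_inr : response G v t s \in Ran v.
  rewrite /response; case: ifP => [vG|_]; last exact/inrP.
  by move: vG; rewrite encnE => /andP[/(wf_endogenous wf)/(_ it) [y -> yR] _].
have iu : inr Ran u by apply/inrP => w; rewrite ffunE; case: eqP => [->|_] //; apply/inrP.
apply: (doint_unique wf ins (interv_inr_fix_others v it) iu).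
apply/ffunP => w; rewrite stepE look_fix_others ffunE; case: eqP => [->|_] //=.
have -> : fn G v u = fn G v t.
  apply/(wf_fn_agree wf)/agree_onP => w' w'v; rewrite ffunE.
  by case: eqP => // E; move: (wf_notin_pa wf v); rewrite -{1}E w'v.
case ev: (v \in en G); last by rewrite /response encnE ev.
have [vG|nvG] := boolP (v \in encn Ran G); first by rewrite (fn_response s wf vG it).
move: (nvG); rewrite encnE ev negbK => c.
by rewrite /response (negbTE nvG) (fn_cnst ins cs ev c it).
Qed.

Lemma response_nonconst (H : sys) v s c : wf_sys Ran H -> v \in encn Ran H ->
  ~ (forall t, inr Ran t -> response H v t s = c).
Proof.
move=> wf vH Hc; move: (vH); rewrite encnE => /andP[ev /negP]; apply.
by apply/(cnstP ev) => t t' it it'; rewrite !(fn_response s wf vH) // !Hc.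
Qed.

Lemma simsys_response (F G : sys) (s : assign) : wf_sys Ran F -> wf_sys Ran G ->
  (forall v t, inr Ran t -> response G v t s = response F v t s) <-> simsys Ran F G.
Proof.
move=> wF wG; split=> [R|/simsysP[E Hs] v t it]; last first.
  by rewrite /response -E; case: ifP => // vF; rewrite (simfn_eq (Hs v vF) it).
have E : encn Ran F = encn Ran G.
  apply/setP => v; have [vF|nvF] := boolP (v \in encn Ran F);
    have [vG|nvG] := boolP (v \in encn Ran G) => //.
    exfalso; apply: (response_nonconst (s := s) (c := s v) wF vF) => t it.
    by rewrite -R // /response (negbTE nvG).
  exfalso; apply: (response_nonconst (s := s) (c := s v) wG vG) => t it.
  by rewrite R // /response (negbTE nvF).
apply/simsysP; split=> // v vF; have vG : v \in encn Ran G by rewrite -E.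
by apply: simfn_of_eq => // t it; rewrite !(fn_response s) ?R.
Qed.

(* For [v] outside [encn F] the formula says that [v] keeps its current value. *)
Definition response_fml (F : sys) (v : V) (t : assign) : fml :=
  if v \in encn Ran F then FCf (fix_others t v) (FEq v (odflt x0 (fn F v t)))
  else fAnds [seq FOr (FNeg (FEq v x)) (FCf (fix_others t v) (FEq v x))
             | x <- enum (Ran v)].

Definition sys_fml (F : sys) : fml :=
  fAnds [seq fAnds [seq response_fml F v t | t <- inr_assigns] | v <- enum V].

Lemma sat_response_fml1 (F G : sys) v t s : wf_sys Ran F -> state Ran s G -> inr Ran t ->
  sat_g (response_fml F v t) [set (s, G)] <-> response G v t s = response F v t s.
Proof.
move=> wF sG it; have cxs := consistent_fix_others t v.
rewrite /response_fml; case: ifP => vF.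
  rewrite sat_FCf1 // sat_FEq1 /= doint_fix_others //.
  by rewrite (fn_response s wF vF it).
rewrite sat_fAnds /response vF; split=> [H|R x _].
  have /H : s v \in enum (Ran v) by rewrite mem_enum; case/stateP: sG => /inrP.
  case/sat_FOr1 => [/sat_FNeg1[]|]; first exact/sat_FEq1.
  by rewrite sat_FCf1 // sat_FEq1 /= doint_fix_others.
apply/sat_FOr1; have [<-|ne] := eqVneq (s v) x; last by left; apply/sat_FNeg1/sat_FEq1/eqP.
by right; rewrite sat_FCf1 // sat_FEq1 /= doint_fix_others // R /response vF.
Qed.

Lemma sat_sys_fml1 (F G : sys) s : wf_sys Ran F -> state Ran s G ->
  sat_g (sys_fml F) [set (s, G)] <-> simsys Ran F G.
Proof.
move=> wF sG; have wG : wf_sys Ran G by case/stateP: sG.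
rewrite -(simsys_response s wF wG) sat_fAnds; split=> [H v t it|H v _].
  have /H/sat_fAnds/(_ t) : v \in enum V by rewrite mem_enum.
  by rewrite mem_inr_assigns => /(_ it)/sat_response_fml1 ->.
by apply/sat_fAnds => t; rewrite mem_inr_assigns => it; apply/sat_response_fml1; auto.
Qed.

Definition assign_fml (s : assign) : fml := fAnds [seq FEq v (s v) | v <- enum V].

Lemma sat_assign_fml s (T : {set pair}) :
  sat_g (assign_fml s) T <-> {in T, forall p, p.1 = s}.
Proof.
rewrite sat_fAnds; split=> [H p pT|H v _ p /H -> //].
by apply/ffunP => v; apply: (H v); rewrite ?mem_enum.
Qed.

Definition state_fml (p : pair) : fml := FAnd (assign_fml p.1) (sys_fml p.2).

Lemma sat_state_fml1 p q : state Ran p.1 p.2 -> state Ran q.1 q.2 ->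
  sat_g (state_fml p) [set q] <-> simstate p q.
Proof.
case: q => s G sp sq; have [_ wp _] := stateP _ _ sp.
rewrite /= sat_assign_fml sat_sys_fml1 // /simstate /=.
split=> [[h1 ->]|/andP[/eqP E ->]]; last by split=> // r /set1P ->.
by move: (h1 (s, G) (set11 _)) => /= ->; rewrite eqxx.
Qed.

Lemma sat_fOrs1 (I : eqType) (g : I -> fml) (l : seq I) (p : pair) :
  sat_g (fOrs (map g l)) [set p] <-> exists2 x, x \in l & sat_g (g x) [set p].
Proof.
elim: l => [|x l IH].
  by split=> [/sat_fbot/setP/(_ p)|[]//]; rewrite !inE eqxx.
rewrite [fOrs _]/= sat_FOr1 IH; split=> [[H|[y yl H]]|[y]].
- by exists x; rewrite ?mem_head.
- by exists y; rewrite // in_cons yl orbT.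
- by rewrite in_cons => /predU1P[->|yl H]; [left|right; exists y].
Qed.

Definition states_fml (X : {set pair}) : fml := fOrs [seq state_fml p | p <- enum X].

Lemma sat_states_fml1 X q : gteam Ran X -> state Ran q.1 q.2 ->
  sat_g (states_fml X) [set q] <-> exists2 p, p \in X & simstate p q.
Proof.
move=> /gteamP gX sq; rewrite sat_fOrs1.
split=> -[p]; rewrite ?mem_enum => pX.
  by move/sat_state_fml1 => m; exists p => //; apply/m; auto.
by move=> m; exists p; rewrite ?mem_enum //; apply/sat_state_fml1; auto.
Qed.

Lemma isCO_sys_fml F : isCO (sys_fml F).
Proof.
rewrite isCO_fAnds all_map; apply/allP => v _; rewrite /= isCO_fAnds all_map.
apply/allP => t _; rewrite /= /response_fml; case: ifP => // _.
by rewrite isCO_fAnds all_map; apply/allP.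
Qed.

Lemma isCO_state_fml p : isCO (state_fml p).
Proof. by rewrite /= isCO_sys_fml isCO_fAnds all_map andbT; apply/allP. Qed.

Lemma isCO_states_fml X : isCO (states_fml X).
Proof. by rewrite isCO_fOrs all_map; apply/allP => p _; apply: isCO_state_fml. Qed.

Lemma wff_sys_fml F : wf_sys Ran F -> wff Ran (sys_fml F).
Proof.
move=> wF; rewrite wff_fAnds all_map; apply/allP => v _; rewrite /= wff_fAnds all_map.
apply/allP => t; rewrite mem_inr_assigns /= /response_fml => it.
have := interv_inr_fix_others v it; rewrite /interv_inr => ok.
case: ifP => [vF|_] /=.
  by rewrite ok; move: vF; rewrite encnE => /andP[/(wf_endogenous wF)/(_ it)[y ->]].
by rewrite wff_fAnds all_map; apply/allP => x; rewrite mem_enum /= ok => ->.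
Qed.

Lemma wff_state_fml p : state Ran p.1 p.2 -> wff Ran (state_fml p).
Proof.
case/stateP => /inrP ins wf _; rewrite /= wff_sys_fml // wff_fAnds all_map andbT.
by apply/allP => v _ /=.
Qed.

Lemma wff_states_fml X : gteam Ran X -> wff Ran (states_fml X).
Proof.
move/gteamP => gX; rewrite wff_fOrs all_map; apply/allP => p.
by rewrite mem_enum => /gX /wff_state_fml.
Qed.

Lemma sat_states_fml X (T : {set pair}) : gteam Ran X -> gteam Ran T ->
  sat_g (states_fml X) T <-> {in T, forall q, exists2 p, p \in X & simstate p q}.
Proof.
move=> gX /gteamP gT; rewrite sat_g_flat ?isCO_states_fml //.
by split=> H q qT; apply/(sat_states_fml1 gX (gT q qT)); apply: H.
Qed.

(* Every variable, and its response to every setting of the other variables,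
   is constant on the team. *)
Definition uniform_fml : fml :=
  fAnds [seq FAnd (FDep [::] v)
          (fAnds [seq FCf (fix_others t v) (FDep [::] v) | t <- inr_assigns])
        | v <- enum V].

Lemma sat_uniform_fml (T : {set pair}) : gteam Ran T ->
  sat_g uniform_fml T <-> {in T &, forall p q, simstate p q}.
Proof.
move=> /gteamP gT; rewrite sat_fAnds; split=> [H p q pT qT|H v _].
  have E : p.1 = q.1.
    by apply/ffunP => v; case: (H v (mem_enum _ v)) => + _; apply.
  have [_ wp _] := stateP _ _ (gT p pT); have [_ wq _] := stateP _ _ (gT q qT).
  rewrite /simstate E eqxx -(simsys_response q.1 wp wq) => v t it.
  case: (H v (mem_enum _ v)) => _ /sat_fAnds /(_ t).
  rewrite mem_inr_assigns => /(_ it (consistent_fix_others t v)) Hv.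
  move: (Hv _ _ (imset_f (intervene _) qT) (imset_f (intervene _) pT)).
  by rewrite /= !doint_fix_others ?gT // E; apply=> X; rewrite in_nil.
split=> [p q pT qT _|]; first by case/andP: (H p q pT qT) => /eqP ->.
apply/sat_fAnds => t; rewrite mem_inr_assigns => it c.
move=> _ _ /imsetP [p pT ->] /imsetP [q qT ->] _ /=.
have [_ wp _] := stateP _ _ (gT p pT); have [_ wq _] := stateP _ _ (gT q qT).
case/andP: (H p q pT qT) => /eqP E /(simsys_response q.1 wp wq) R.
by rewrite !doint_fix_others ?gT // E R.
Qed.

Lemma isCOD_uniform_fml : isCOD uniform_fml.
Proof.
rewrite isCOD_fAnds all_map; apply/allP => v _ /=.
by rewrite isCOD_fAnds all_map; apply/allP.
Qed.

Lemma wff_uniform_fml : wff Ran uniform_fml.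
Proof.
rewrite wff_fAnds all_map; apply/allP => v _ /=.
rewrite wff_fAnds all_map; apply/allP => t; rewrite mem_inr_assigns /= andbT.
exact: interv_inr_fix_others.
Qed.

Definition classes_fml (m : nat) : fml := iter m (FOr uniform_fml) fbot.

Lemma isCOD_classes_fml m : isCOD (classes_fml m).
Proof. by elim: m => //= m ->; rewrite isCOD_uniform_fml. Qed.

Lemma wff_classes_fml m : wff Ran (classes_fml m).
Proof. by elim: m => /= [|m ->]; rewrite ?x0_inr ?wff_uniform_fml. Qed.

Definition irredundant (Y : {set pair}) : Prop :=
  {in Y &, forall y y', simstate y y' -> y = y'}.

Lemma sat_classes_fml_le m (T Y : {set pair}) : gteam Ran T -> sat_g (classes_fml m) T ->
  Y \subset T -> irredundant Y -> #|Y| <= m.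
Proof.
elim: m T Y => [|m IH] T Y gT.
  by move/sat_fbot => -> /subset_leq_card; rewrite cards0.
case=> T1 [T2 [E [H1 H2]]] YT rY; rewrite -(cardsID T1 Y) -add1n.
have [gT1 gT2] : gteam Ran T1 /\ gteam Ran T2.
  by split; apply: gteam_sub gT _; rewrite -E (subsetUl, subsetUr).
apply: leq_add.
  apply/card_le1_eqP => y y' /setIP[yY yT1] /setIP[y'Y y'T1].
  by apply: rY => //; move/(sat_uniform_fml gT1): H1; apply.
apply: (IH T2) => //; last by move=> y y' /setDP[yY _] /setDP[y'Y _]; apply: rY.
apply/subsetP => y /setDP[yY nyT1]; move/subsetP: YT => /(_ y yY).
by rewrite -E => /setUP[/(negP nyT1)|].
Qed.

Lemma sat_classes_fml_cover (l : seq pair) (T : {set pair}) : gteam Ran T ->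
  {in T, forall q, exists2 p, p \in l & simstate p q} -> sat_g (classes_fml (size l)) T.
Proof.
elim: l T => [|p l IH] T gT H.
  by apply/sat_fbot/setP => q; rewrite inE; apply/negP => /H[].
exists [set q in T | simstate p q], [set q in T | ~~ simstate p q].
split; first by apply/setP => q; rewrite !inE -andb_orr orbN andbT.
have gsub (b : pair -> bool) : gteam Ran [set q in T | b q].
  by apply: gteam_sub gT _; apply/subsetP => q /setIdP[].
split.
  apply/sat_uniform_fml => // q q' /setIdP[_ m1] /setIdP[_ m2].
  exact: simstate_trans (simstate_sym m1) m2.
apply: IH => // q /setIdP[/H[p']]; rewrite in_cons => /predU1P[->|p'l m _].
  by move=> m /negP.
by exists p'.
Qed.

(* Some class of [X] is missing from the team: by irredundance of [X], the left
   disjunct can meet at most [#|X| - 1] of its classes. *)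
Definition avoid_fml (X : {set pair}) : fml :=
  FOr (classes_fml #|X|.-1) (FNeg (states_fml X)).

Lemma isCOD_avoid_fml X : isCOD (avoid_fml X).
Proof. by rewrite /= isCOD_classes_fml isCO_states_fml. Qed.

Lemma wff_avoid_fml X : gteam Ran X -> wff Ran (avoid_fml X).
Proof. by move=> gX; rewrite /= wff_classes_fml wff_states_fml. Qed.

Lemma sat_avoid_fml_missing (X T : {set pair}) : gteam Ran X -> gteam Ran T ->
  irredundant X -> X != set0 -> sat_g (avoid_fml X) T ->
  ~ {in X, forall x, exists2 q, q \in T & simstate x q}.
Proof.
move=> gX gT rX nX [T1 [T2 [E [H1 H2]]]] cov; have /gteamP sT := gT.
pose f x := odflt x [pick q in T | simstate x q].
have fP x : x \in X -> f x \in T /\ simstate x (f x).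
  move=> /cov[q qT m]; rewrite /f; case: pickP => [q' /andP[] //|/(_ q)].
  by rewrite qT m.
have fT1 : f @: X \subset T1.
  apply/subsetP => _ /imsetP[x xX ->]; have [fT m] := fP x xX.
  move: (fT); rewrite -E => /setUP[//|/H2[]].
  by apply/(sat_states_fml1 gX (sT _ fT)); exists x.
have f_sim x x' : x \in X -> x' \in X -> simstate (f x) (f x') -> simstate x x'.
  move=> xX x'X m; have [_ m1] := fP x xX; have [_ m2] := fP x' x'X.
  exact: simstate_trans (simstate_trans m1 m) (simstate_sym m2).
have rY : irredundant (f @: X).
  by move=> _ _ /imsetP[x xX ->] /imsetP[x' x'X ->] /(f_sim _ _ xX x'X)/(rX _ _ xX x'X) ->.
have finj : {in X &, injective f}.
  move=> x x' xX x'X Ef; apply: rX => //; apply: f_sim => //; rewrite Ef.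
  by apply: simstate_refl; apply: sT; case: (fP x' x'X).
have gT1 : gteam Ran T1 by apply: gteam_sub gT _; rewrite -E subsetUl.
have := sat_classes_fml_le gT1 H1 fT1 rY.
by rewrite card_in_imset // leqNgt ltn_predL card_gt0 nX.
Qed.

Lemma sat_avoid_fml_of_missing (X T : {set pair}) : gteam Ran X -> gteam Ran T ->
  ~ {in X, forall x, exists2 q, q \in T & simstate x q} -> sat_g (avoid_fml X) T.
Proof.
move=> gX gT ncov; have /gteamP sT := gT.
have [x xX nx] : exists2 x, x \in X & {in T, forall q, ~~ simstate x q}.
  apply: contrapT => H; apply: ncov => x xX; apply: contrapT => nq.
  by apply: H; exists x => // q qT; apply/negP => m; apply: nq; exists q.
pose B := [set q | [exists p in X, simstate p q]].
exists (T :&: B), (T :\: B); rewrite setID; split=> //; split.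
  have -> : #|X|.-1 = size (enum (X :\ x)) by rewrite -cardE (cardsD1 x X) xX.
  apply: sat_classes_fml_cover; first by apply: gteam_sub gT (subsetIl _ _).
  move=> q /setIP[qT]; rewrite inE => /exists_inP[p pX m]; exists p => //.
  rewrite mem_enum !inE pX andbT; apply/eqP => px.
  by move: (nx q qT); rewrite -px m.
move=> q /setDP[qT nqB] /(sat_states_fml1 gX (sT q qT))[p pX m].
by move: nqB; rewrite inE => /exists_inP; apply; exists p.
Qed.

(** * Definability *)

Lemma exists_irredundant_sub (T : {set pair}) : gteam Ran T ->
  exists2 X : {set pair}, X \subset T & irredundant X /\ simteam X T.
Proof.
move=> /gteamP sT.
pose X := [set q in T | [forall q' in T, simstate q' q ==> (enum_rank q <= enum_rank q')]].
have sX : X \subset T by apply/subsetP => q /setIdP[].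
exists X => //; split.
  move=> x x' /setIdP[xT /forall_inP hx] /setIdP[x'T /forall_inP hx'] m.
  apply/enum_rank_inj/val_inj/eqP; rewrite eqn_leq.
  by rewrite (implyP (hx' x xT)) // (implyP (hx x' x'T)) // simstate_sym.
split=> [x /(subsetP sX) xT|q qT]; first by exists x => //; exact/simstate_refl/sT.
pose P := [pred i | (i \in T) && simstate i q].
have Pq : P q by rewrite /= qT simstate_refl // sT.
have [x /andP[xT m] xmin] := arg_minnP (fun i => val (enum_rank i)) Pq.
exists x => //; rewrite inE xT; apply/forall_inP => q' q'T; apply/implyP => m'.
by apply: xmin; rewrite /= q'T (simstate_trans m' m).
Qed.

Section Definability.
Variable K : {set pair} -> Prop.
Hypotheses (Kd : g_downward K) (Ke : g_eqclosed Ran K) (Kn : exists T, K T).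

Lemma K_set0 : K set0.
Proof. by case: Kn => T KT; apply: Kd KT (sub0set _). Qed.

Lemma K_simteam T S : K T -> gteam Ran T -> gteam Ran S -> simteam T S -> K S.
Proof. by move=> KT gT gS sm; apply: Ke KT gS (proj2 (geqv_simteam gT gS) sm). Qed.

Lemma K_covered T S : K T -> gteam Ran T -> gteam Ran S ->
  {in S, forall q, exists2 p, p \in T & simstate p q} -> K S.
Proof.
move=> KT gT gS cov; have sub := sim_part_sub S T.
apply: K_simteam (Kd KT sub) (gteam_sub gT sub) gS _; apply/simteam_sym/simteam_sim_part.
by move=> q /cov[p pT m]; exists p => //; exact: simstate_sym.
Qed.

Definition cod_fml : fml := fAnds [seq avoid_fml X | X <- enum {set pair} &
  `[< gteam Ran X /\ irredundant X /\ X != set0 /\ ~ K X >]].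

Lemma isCOD_cod_fml : isCOD cod_fml.
Proof. by rewrite isCOD_fAnds all_map; apply/allP => X _; apply: isCOD_avoid_fml. Qed.

Lemma wff_cod_fml : wff Ran cod_fml.
Proof.
rewrite wff_fAnds all_map; apply/allP => X.
by rewrite mem_filter => /andP[/asboolP[gX _] _]; apply: wff_avoid_fml.
Qed.

Lemma sat_cod_fml T : gteam Ran T -> K T <-> sat_g cod_fml T.
Proof.
move=> gT; have /gteamP sT := gT; rewrite sat_fAnds; split=> [KT X|H].
  rewrite mem_filter => /andP[/asboolP[gX [rX [nX nKX]]] _].
  apply: sat_avoid_fml_of_missing => // cov; apply: nKX.
  by apply: K_covered KT gT gX _ => x /cov[q qT /simstate_sym]; exists q.
(* Otherwise a set of representatives of T is an irredundant team outside K
   all of whose classes T meets. *)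
apply: contrapT => nKT; have [X sXT [rX simXT]] := exists_irredundant_sub gT.
have gX := gteam_sub gT sXT.
have nX : X != set0.
  apply/eqP => X0; apply: nKT.
  by apply: (K_simteam K_set0 (gteam_sub gT (sub0set _)) gT); rewrite -X0.
have /H : X \in [seq X <- enum {set pair} |
    `[< gteam Ran X /\ irredundant X /\ X != set0 /\ ~ K X >]].
  rewrite mem_filter mem_enum andbT; apply/asboolP.
  split; [exact: gX|split; [exact: rX|split; [exact: nX|]]].
  by move=> KX; apply/nKT/(K_simteam KX gX gT simXT).
move/sat_avoid_fml_missing; apply=> // x xX; exists x; first exact: (subsetP sXT).
by apply: simstate_refl; apply/sT/(subsetP sXT).
Qed.

Definition cosq_fml : fml :=
  fGOrs [seq states_fml T | T <- enum {set pair} & `[< K T /\ gteam Ran T >]].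

Lemma isCOsq_cosq_fml : isCOsq cosq_fml.
Proof.
rewrite isCOsq_fGOrs all_map; apply/allP => T _.
exact/isCO_COsq/isCO_states_fml.
Qed.

Lemma wff_cosq_fml : wff Ran cosq_fml.
Proof.
rewrite wff_fGOrs all_map; apply/allP => T.
by rewrite mem_filter => /andP[/asboolP[_ gT] _]; apply: wff_states_fml.
Qed.

Lemma sat_cosq_fml S : gteam Ran S -> K S <-> sat_g cosq_fml S.
Proof.
move=> gS; have /gteamP sS := gS; rewrite sat_fGOrs; split=> [KS|[->|[T]]].
- right; exists S; first by rewrite mem_filter mem_enum andbT; apply/asboolP.
  by apply/sat_states_fml => // q qS; exists q => //; exact/simstate_refl/sS.
- exact: K_set0.
- rewrite mem_filter => /andP[/asboolP[KT gT] _] /(sat_states_fml gT gS).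
  exact: K_covered.
Qed.

End Definability.

Lemma g_closed_definable (K : {set pair} -> Prop) :
  gt_class Ran K -> (exists T, K T) ->
  ((g_downward K /\ g_eqclosed Ran K) <->
     (exists f, [&& isCOsq f & wff Ran f] /\ g_defines Ran K f)) /\
  ((g_downward K /\ g_eqclosed Ran K) <->
     (exists f, [&& isCOD f & wff Ran f] /\ g_defines Ran K f)).
Proof.
move=> cK Kn; split; split=> [[Kd Ke]|[f [/andP[_ wf] Kf]]];
  try exact: g_defines_closed wf Kf.
- exists (cosq_fml K); rewrite isCOsq_cosq_fml wff_cosq_fml.
  by split=> // T gT; apply: sat_cosq_fml.
- exists (cod_fml K); rewrite isCOD_cod_fml wff_cod_fml.
  by split=> // T gT; apply: sat_cod_fml.
Qed.

Lemma c_closed_definable (K : {set assign} * sys -> Prop) :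
  ct_class Ran K -> (exists T, K T) ->
  ((c_downward K /\ c_eqclosed Ran K) <->
     (exists f, [&& isCOsq f & wff Ran f] /\ c_defines Ran K f)) /\
  ((c_downward K /\ c_eqclosed Ran K) <->
     (exists f, [&& isCOD f & wff Ran f] /\ c_defines Ran K f)).
Proof.
move=> cK [T KT]; have gK : gt_class Ran (lift_class K) by move=> ? [].
have nK : exists T, lift_class K T := ex_intro _ _ (lift_team_class cK KT).
have [[cosq _] [cod _]] := g_closed_definable gK nK.
split; split=> [[Kd Ke]|[f [/andP[_ wf] Kf]]]; try exact: c_defines_closed cK wf Kf.
- have [f [Pf Kf]] := cosq (lift_class_closed Kd).
  by exists f; split=> //; apply: c_defines_of_lift.
- have [f [Pf Kf]] := cod (lift_class_closed Kd).
  by exists f; split=> //; apply: c_defines_of_lift.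
Qed.

End Formulas.
End Causal.

Theorem theorem5p1 (V Val : finType) (Ran : V -> {set Val})
    (HV : 0 < #|V|) (HRan : forall X : V, Ran X != set0) :
  (forall K : {set @assign V Val} * @sys V Val -> Prop,
     ct_class Ran K -> (exists T, K T) ->
     ((c_downward K /\ c_eqclosed Ran K) <->
        (exists f, [&& isCOsq f & wff Ran f] /\ c_defines Ran K f)) /\
     ((c_downward K /\ c_eqclosed Ran K) <->
        (exists f, [&& isCOD f & wff Ran f] /\ c_defines Ran K f))) /\
  (forall K : {set (@assign V Val * @sys V Val)} -> Prop,
     gt_class Ran K -> (exists T, K T) ->
     ((g_downward K /\ g_eqclosed Ran K) <->
        (exists f, [&& isCOsq f & wff Ran f] /\ g_defines Ran K f)) /\
     ((g_downward K /\ g_eqclosed Ran K) <->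
        (exists f, [&& isCOD f & wff Ran f] /\ g_defines Ran K f))).
Proof.
have [v0 _] := card_gt0P HV; have /set0Pn [x0 x0_inr] := HRan v0.
split=> K cK nK; first exact (c_closed_definable x0_inr cK nK).
exact (g_closed_definable x0_inr cK nK).
Qed.
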